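(* Let $q$ be a prime power, $\ell\ge1$, $\beta\in\{1,-1\}\subseteq\mathbb{F}_q$ of multiplicative order $r$, assume $q\equiv 1\pmod{r\ell}$, and let $\omega\in\mathbb{F}_q$ be a primitive $r\ell$-th root of unity with $\omega^\ell=\beta$. For $0\le k\le \ell-1$ let $\eta_k(y)=\prod_{0\le j\le\ell-1,\,j\ne k}\frac{y-\omega^{1+jr}}{\omega^{1+kr}-\omega^{1+jr}}$ (a polynomial of degree $\ell-1$), and let $\eta_k^*(y)=y^{\ell-1}\eta_k(1/y)$ be its reciprocal polynomial. Then for each $k=0,1,\dots,\ell-1$ there is a constant $b_k\in\mathbb{F}_q^*$ such that $$\eta_k^*(y)=\begin{cases} b_k\,\eta_{\ell-2-k}(y) & \text{if } \beta=1,\\ b_k\,\eta_{\ell-1-k}(y) & \text{if } \beta=-1,\end{cases}$$ where subscripts are read modulo $\ell$. *)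

From mathcomp Require Import all_boot all_order all_algebra all_field.
Set Implicit Arguments. Unset Strict Implicit. Unset Printing Implicit Defensive.
Import GRing.Theory.
Local Open Scope ring_scope.

Definition eta (F : fieldType) (w : F) (r l k : nat) : {poly F} :=
  \prod_(j < l | j != k :> nat)
     (('X - (w ^+ (1 + j * r))%:P) * ((w ^+ (1 + k * r) - w ^+ (1 + j * r))^-1)%:P).

(* reciprocal polynomial of degree-bound n: y^n p(1/y), i.e. coefficients reversed *)
Definition recip (F : fieldType) (n : nat) (p : {poly F}) : {poly F} :=
  \poly_(i < n.+1) p`_(n - i).

From mathcomp Require Import all_boot all_order all_algebra all_field zify.
Set Implicit Arguments. Unset Strict Implicit. Unset Printing Implicit Defensive.
Import GRing.Theory.
Local Open Scope ring_scope.

(** The nodes [x_j = w^(1 + j r)] are pairwise distinct and the set of nodes is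
  closed under inversion, [x_k^-1 = x_m] with [k + m + 2/r = 0 (mod l)].  The
  reciprocal [y^(l-1) eta_k(1/y)] and [x_k^-(l-1) eta_m] are polynomials of
  degree [< l] that both take the value [x_m^(l-1)] at [x_m] and vanish at
  every other node, so they coincide. *)

Lemma recip_horner (F : fieldType) n (p : {poly F}) (z : F) :
  z != 0 -> (size p <= n.+1)%N -> (recip n p).[z] = z ^+ n * p.[z^-1].
Proof.
move=> z_neq0 size_p; rewrite /recip horner_poly (horner_coef_wide _ size_p).
rewrite mulr_sumr (reindex_inj rev_ord_inj) /=; apply: eq_bigr => i _.
have le_in : (i <= n)%N by rewrite -ltnS.
rewrite subnS subSn // /= subKn // exprVn mulrCA; congr (_ * _).
by rewrite -[in z ^+ n](subnK le_in) exprD mulfK // expf_neq0.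
Qed.

Lemma poly_interp_unique (R : idomainType) n (p q : {poly R}) (rs : seq R) :
  (size p <= n)%N -> (size q <= n)%N -> uniq rs -> (n <= size rs)%N ->
  {in rs, forall z, p.[z] = q.[z]} -> p = q.
Proof.
move=> size_p size_q rs_uniq size_rs pq_rs; apply/eqP; rewrite -subr_eq0.
apply/eqP/(roots_geq_poly_eq0 _ rs_uniq).
  by apply/allP => z /pq_rs pq_z; rewrite /root hornerD hornerN pq_z subrr.
apply: leq_trans size_rs; apply: leq_trans (size_polyD _ _) _.
by rewrite size_polyN geq_max size_p size_q.
Qed.

Definition lagrange_basis (F : fieldType) (x : nat -> F) (l k : nat) : {poly F} :=
  \prod_(j < l | j != k :> nat) (('X - (x j)%:P) * ((x k - x j)^-1)%:P).

Section LagrangeBasis.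

Variables (F : fieldType) (x : nat -> F) (l : nat).

Lemma size_lagrange_basis k : (k < l)%N -> (size (lagrange_basis x l k) <= l)%N.
Proof.
move=> lt_kl; rewrite /lagrange_basis big_split /= -rmorph_prod mulrC mul_polyC.
apply: leq_trans (size_scale_leq _ _) _.
rewrite size_prod => [|j _]; last by rewrite polyXsubC_eq0.
rewrite (eq_bigr (fun=> 2%N)) => [|j _]; last by rewrite size_XsubC.
rewrite sum_nat_const.
have -> : #|[pred j : 'I_l | j != k :> nat]| = #|predC1 (Ordinal lt_kl)|.
  by apply: eq_card => j; rewrite !inE.
by rewrite cardC1 card_ord; lia.
Qed.

Hypothesis x_inj : forall a b, (a < l)%N -> (b < l)%N -> x a = x b -> a = b.

Lemma lagrange_basis_node k i :
  (k < l)%N -> (i < l)%N -> (lagrange_basis x l k).[x i] = (i == k)%:R.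
Proof.
move=> lt_kl lt_il; rewrite /lagrange_basis horner_prod.
have [->|neq_ik] := eqVneq i k.
  apply: big1 => j neq_jk; rewrite hornerM hornerXsubC hornerC mulfV //.
  by rewrite subr_eq0; apply: contra neq_jk => /eqP/(x_inj lt_kl (ltn_ord j)) ->.
apply/eqP/prodf_eq0; exists (Ordinal lt_il) => //.
by rewrite hornerM hornerXsubC subrr mul0r.
Qed.

Hypothesis x_inv_closed :
  forall i, (i < l)%N -> exists2 j, (j < l)%N & x i * x j = 1.

Lemma recip_lagrange_basis k m : (k < l)%N -> (m < l)%N -> x k * x m = 1 ->
  recip l.-1 (lagrange_basis x l k) = x k ^- l.-1 *: lagrange_basis x l m.
Proof.
move=> lt_kl lt_ml xkm1.
have l_eq : l.-1.+1 = l by rewrite prednK // (leq_ltn_trans _ lt_kl).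
apply: (@poly_interp_unique _ l _ _ [seq x i | i <- iota 0 l]).
- by rewrite -[X in (_ <= X)%N]l_eq size_poly.
- exact: leq_trans (size_scale_leq _ _) (size_lagrange_basis lt_ml).
- rewrite map_inj_in_uniq ?iota_uniq // => a b.
  by rewrite !mem_iota !add0n => lt_al lt_bl; apply: x_inj.
- by rewrite size_map size_iota.
move=> z /mapP[i]; rewrite mem_iota add0n => /andP[_ lt_il] ->.
have [j lt_jl xij1] := x_inv_closed lt_il.
have xi_neq0 : x i != 0 by rewrite -unitfE; apply/unitrPr; exists (x j).
rewrite hornerZ recip_horner ?l_eq ?size_lagrange_basis //.
rewrite (mulr1_eq xij1) !lagrange_basis_node //.
have -> : (j == k) = (i == m).
  apply/eqP/eqP => [j_eq_k | i_eq_m]; apply: x_inj => //.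
    by rewrite -(mulr1_eq xkm1) -j_eq_k -(mulr1_eq xij1) invrK.
  by rewrite -(mulr1_eq xij1) i_eq_m; apply: mulr1_eq; rewrite mulrC.
have [-> | _] := eqVneq i m; last by rewrite !mulr0.
by rewrite !mulr1 -exprVn (mulr1_eq xkm1).
Qed.

End LagrangeBasis.

Lemma modn_complement n d : (0 < d)%N -> exists2 j, (j < d)%N & (n + j = 0 %[mod d])%N.
Proof.
move=> d_gt0; exists ((d - n %% d) %% d)%N; first exact: ltn_pmod.
by rewrite modnDmr -modnDml subnKC ?modnn ?mod0n // ltnW // ltn_pmod.
Qed.

Section RootOfUnityNodes.

Variables (F : fieldType) (w : F) (r l : nat).
Hypothesis w_prim : (r * l).-primitive_root w.

Let r_gt0 : (0 < r)%N.
Proof. by move: (prim_order_gt0 w_prim); rewrite muln_gt0 => /andP[]. Qed.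

Let l_gt0 : (0 < l)%N.
Proof. by move: (prim_order_gt0 w_prim); rewrite muln_gt0 => /andP[]. Qed.

Lemma root_nodes_inj a b : (a < l)%N -> (b < l)%N ->
  w ^+ (1 + a * r) = w ^+ (1 + b * r) -> a = b.
Proof.
move=> lt_al lt_bl /eqP; rewrite (eq_prim_root_expr w_prim) eqn_modDl.
by rewrite ![(_ * r)%N]mulnC -!muln_modr eqn_pmul2l // !modn_small // => /eqP.
Qed.

Lemma root_nodes_mul_eq1 c a b : (r * c = 2)%N ->
  (w ^+ (1 + a * r) * w ^+ (1 + b * r) == 1) = (a + b + c == 0 %[mod l])%N.
Proof.
move=> rc2; rewrite -exprD -(expr0 w) (eq_prim_root_expr w_prim).
have -> : (1 + a * r + (1 + b * r) = r * (a + b + c))%N by nia.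
by rewrite -[in LHS](muln0 r) -!muln_modr eqn_pmul2l.
Qed.

Lemma recip_eta c k m : (r * c = 2)%N -> (k < l)%N -> (m < l)%N ->
    (k + m + c = 0 %[mod l])%N ->
  recip l.-1 (eta w r l k) = w ^+ (1 + k * r) ^- l.-1 *: eta w r l m.
Proof.
move=> rc2 lt_kl lt_ml kmc.
apply: (@recip_lagrange_basis _ (fun j => w ^+ (1 + j * r))) => //.
- exact: root_nodes_inj.
- move=> i lt_il; have [j lt_jl ijc] := modn_complement (i + c) l_gt0.
  by exists j => //; apply/eqP; rewrite (root_nodes_mul_eq1 _ _ rc2) addnAC ijc.
- by apply/eqP; rewrite (root_nodes_mul_eq1 _ _ rc2) kmc.
Qed.

End RootOfUnityNodes.

Theorem lemma5 (F : finFieldType) (l r : nat) (beta w : F) :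
  (1 <= l)%N ->
  (beta = 1 \/ beta = -1) ->
  r.-primitive_root beta ->
  #|F| = 1 %[mod r * l] ->
  (r * l).-primitive_root w ->
  w ^+ l = beta ->
  forall k : nat, (k < l)%N ->
  exists b : F, b != 0 /\
    (r = 1%N -> recip l.-1 (eta w r l k) = b *: eta w r l ((l + l - 2 - k) %% l)) /\
    (r = 2%N -> recip l.-1 (eta w r l k) = b *: eta w r l ((l - 1 - k) %% l)).
Proof.
(* Only the primitivity of [w] matters: [beta] merely selects the branch [r = 1] or [r = 2]. *)
move=> l_gt0 _ _ _ w_prim _ k lt_kl.
have w_neq0 : w != 0 by rewrite (prim_root_eq0 w_prim) -lt0n (prim_order_gt0 w_prim).
exists (w ^+ (1 + k * r) ^- l.-1); split; first by rewrite invr_neq0 // !expf_neq0.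
split=> [r1 | r2].
- apply: (recip_eta w_prim (c := 2)); rewrite ?r1 ?ltn_pmod // addnAC modnDmr.
  have -> : (k + 2 + (l + l - 2 - k) = 2 * l)%N by lia.
  by rewrite modnMl mod0n.
- apply: (recip_eta w_prim (c := 1)); rewrite ?r2 ?ltn_pmod // addnAC modnDmr.
  have -> : (k + 1 + (l - 1 - k) = l)%N by lia.
  by rewrite modnn mod0n.
Qed.
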